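(* Let $d\in\mathbb{N}$, $k\in\{1,\dots,d\}$, $\varepsilon>0$, and $\mathbf{e}_1,\mathbf{e}_2\in\mathbb{R}^d$. Define $$\psi_{sign}(\mathbf{e}_2):=\begin{cases}\max_{i\notin\mathrm{TopFeatures}(\mathbf{e}_1;k)}|e_{2i}| & (k<d),\\ 0 & (k=d),\end{cases}$$ and $$\ell_{\mathrm{Sgn}}(\mathbf{e}_2;\mathbf{e}_1,k):=\frac1k\sum_{i\in\mathrm{TopFeatures}(\mathbf{e}_1;k)}\max\big(0,\ \psi_{sign}(\mathbf{e}_2)-\mathrm{sign}(e_{1i})\,e_{2i}+\varepsilon\big).$$ Then $$1-\mathrm{SignAgree}(\mathbf{e}_1,\mathbf{e}_2;k)\le\varepsilon^{-1}\,\ell_{\mathrm{Sgn}}(\mathbf{e}_2;\mathbf{e}_1,k).$$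
   Context: $\mathrm{sign}(x):=1$ if $x\ge0$ and $-1$ otherwise. For $\mathbf{x}\in\mathbb{R}^d$, $\mathrm{rank}(\mathbf{x},i)$ denotes the position of index $i$ when indices are ordered by descending $|x_i|$, i.e. $|\{j\in[d]:|x_j|\ge|x_i|\}|$, with ties broken so that ranks form a permutation of $[d]$ (paper's convention: if $|x_i|=|x_j|$ with $i>j$ then $\mathrm{rank}(\mathbf{x},j)=\mathrm{rank}(\mathbf{x},i)+1$). $\mathrm{TopFeatures}(\mathbf{x};k):=\{i\in[d]:\mathrm{rank}(\mathbf{x},i)\le k\}$. The top-$k$ sign agreement is $\mathrm{SignAgree}(\mathbf{e}_1,\mathbf{e}_2;k):=\frac1k\big|\{i\in[d]: i\in\mathrm{TopFeatures}(\mathbf{e}_1;k)\wedge i\in\mathrm{TopFeatures}(\mathbf{e}_2;k)\wedge\mathrm{sign}(e_{1i})=\mathrm{sign}(e_{2i})\}\big|$. *)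

From mathcomp Require Import all_boot all_order all_algebra.
Set Implicit Arguments. Unset Strict Implicit. Unset Printing Implicit Defensive.
Import Order.TTheory GRing.Theory Num.Theory.
Local Open Scope ring_scope.

Section Defs.
Variables (R : realFieldType) (d : nat).

Definition sgn (x : R) : R := if 0 <= x then 1 else -1.

(* rank(x,i): number of j with |x_j| > |x_i|, plus number of ties j with j >= i
   (paper's convention: among ties, a larger index gets a smaller rank,
   i.e. |x_i| = |x_j|, i > j  ==>  rank(x,j) = rank(x,i) + 1). *)
Definition rank (x : 'I_d -> R) (i : 'I_d) : nat :=
  (#|[set j : 'I_d | (`|x i| < `|x j|)%R]|
   + #|[set j : 'I_d | ((`|x j| == `|x i|)%R) && (i <= j)%N]|)%N.

Definition TopFeatures (x : 'I_d -> R) (k : nat) : {set 'I_d} :=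
  [set i : 'I_d | (rank x i <= k)%N].

Definition SignAgree (e1 e2 : 'I_d -> R) (k : nat) : R :=
  (#|[set i : 'I_d | [&& i \in TopFeatures e1 k, i \in TopFeatures e2 k
                       & sgn (e1 i) == sgn (e2 i)]]|)%:R / k%:R.

Definition psi_sign (e1 e2 : 'I_d -> R) (k : nat) : R :=
  if (k < d)%N then \big[Num.max/0]_(i : 'I_d | i \notin TopFeatures e1 k) `|e2 i|
  else 0.

Definition loss_sgn (eps : R) (e1 e2 : 'I_d -> R) (k : nat) : R :=
  k%:R^-1 * \sum_(i in TopFeatures e1 k)
              Num.max 0 (psi_sign e1 e2 k - sgn (e1 i) * e2 i + eps).

End Defs.

From mathcomp Require Import all_boot all_order all_algebra.
Import Order.TTheory GRing.Theory Num.Theory.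
Set Implicit Arguments. Unset Strict Implicit.
Local Open Scope ring_scope.

(* Since rank is a bijection onto {1, ..., d}, TopFeatures(e1; k) has exactly k
   elements.  At an index i of it where top-k sign agreement fails,
   sign(e1_i) e2_i <= psi: either the signs differ and the product is <= 0, or
   i is not among the top k of e2; then more than k indices are ranked at or
   above i in e2, so one of them, j, lies outside TopFeatures(e1; k), and
   |e2_i| <= |e2_j| <= psi.  There the hinge term is at least eps, so
   eps (k - #agreements) <= k loss. *)

Lemma card_ord_ltn (n k : nat) : (k <= n)%N -> #|[set o : 'I_n | (o < k)%N]| = k.
Proof.
move=> kn; have -> : [set o : 'I_n | (o < k)%N] = widen_ord kn @: [set: 'I_k].
  apply/setP => o; rewrite inE; apply/idP/imsetP => [ok | [o' _ ->]].
    by exists (Ordinal ok) => //; apply: val_inj.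
  by rewrite /= ltn_ord.
rewrite card_imset ?cardsT ?card_ord //.
by move=> a b /(congr1 val) /= /val_inj.
Qed.

Section Rank.
Variables (R : realFieldType) (d : nat) (x : 'I_d -> R).

Definition outranks (j i : 'I_d) : bool :=
  (`|x i| < `|x j|) || ((`|x j| == `|x i|) && (i <= j)%N).

Lemma rankE i : rank x i = #|[set j | outranks j i]|.
Proof.
rewrite /rank -cardsUI (_ : _ :&: _ = set0) ?cards0 ?addn0.
  by apply: eq_card => j; rewrite !inE.
apply/setP => j; rewrite !inE.
by case: (ltgtP `|x i| `|x j|) => //= ->; rewrite eqxx.
Qed.

Lemma outranks_refl i : outranks i i.
Proof. by rewrite /outranks eqxx leqnn orbT. Qed.

Lemma outranks_trans i j l : outranks l j -> outranks j i -> outranks l i.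
Proof.
rewrite /outranks => /orP[lj|/andP[/eqP lj lj']] /orP[ji|/andP[/eqP ji ji']].
- by rewrite (lt_trans ji lj).
- by rewrite -ji lj.
- by rewrite lj ji.
- by rewrite lj ji eqxx (leq_trans ji' lj') orbT.
Qed.

Lemma outranks_total i j : outranks j i || outranks i j.
Proof. by rewrite /outranks; case: (ltgtP `|x i| `|x j|) => //= _; apply: leq_total. Qed.

Lemma outranks_anti i j : outranks j i -> outranks i j -> i = j.
Proof.
rewrite /outranks => /orP[ji|/andP[/eqP ji ji']] /orP[ij|/andP[/eqP ij ij']].
- by have := lt_trans ji ij; rewrite ltxx.
- by move: ji; rewrite ij ltxx.
- by move: ij; rewrite ji ltxx.
- by apply: val_inj; apply/eqP; rewrite eqn_leq ji' ij'.
Qed.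

Lemma rank_inj : injective (rank x).
Proof.
move=> i j; rewrite !rankE => eq_card; apply/eqP/negPn/negP => neq_ij.
wlog ji : i j eq_card neq_ij / outranks j i.
  move=> W; case/orP: (outranks_total i j); first exact: W.
  by apply: W; rewrite // eq_sym.
suff: [set l | outranks l j] \proper [set l | outranks l i].
  by move/proper_card; rewrite eq_card ltnn.
apply/properP; split.
  by apply/subsetP => l; rewrite !inE => /outranks_trans; apply.
exists i; rewrite !inE ?outranks_refl //.
by apply: contra neq_ij => ij; rewrite (outranks_anti ji ij).
Qed.

Lemma rank_gt0 i : (0 < rank x i)%N.
Proof. by rewrite rankE card_gt0; apply/set0Pn; exists i; rewrite inE outranks_refl. Qed.

Lemma rank_le i : (rank x i <= d)%N.
Proof. by rewrite rankE; apply: leq_trans (max_card _) _; rewrite card_ord. Qed.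

Lemma card_TopFeatures k : (k <= d)%N -> #|TopFeatures x k| = k.
Proof.
move=> kd; have rank_lt i : ((rank x i).-1 < d)%N.
  by rewrite prednK ?rank_le ?rank_gt0.
pose r i := Ordinal (rank_lt i).
have r_inj : injective r.
  move=> i j /(congr1 val) /= eq_ij; apply: rank_inj.
  by rewrite -(prednK (rank_gt0 i)) -(prednK (rank_gt0 j)) eq_ij.
have -> : TopFeatures x k = r @^-1: [set o : 'I_d | (o < k)%N].
  by apply/setP => i; rewrite !inE /= -subn1 ltn_subLR ?add1n ?rank_gt0.
by rewrite card_preimset // card_ord_ltn.
Qed.

Lemma exists_outside_norm_ge (S : {set 'I_d}) i :
  (#|S| < rank x i)%N -> exists2 j, j \notin S & `|x i| <= `|x j|.
Proof.
rewrite rankE => ltS; have /subsetPn[j] : ~~ ([set j | outranks j i] \subset S).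
  by apply: contraTN ltS => /subset_leq_card; rewrite leqNgt.
rewrite inE => ji jS; exists j => //.
by case/orP: ji => [/ltW | /andP[/eqP -> _]].
Qed.

End Rank.

Lemma sgn_mulr_le_norm (R : realFieldType) (a b : R) : sgn a * b <= `|b|.
Proof.
rewrite /sgn; case: ifP => _; first by rewrite mul1r ler_norm.
by rewrite mulN1r -normrN ler_norm.
Qed.

Lemma sgn_mulr_le0 (R : realFieldType) (a b : R) : sgn a != sgn b -> sgn a * b <= 0.
Proof.
rewrite /sgn; case: (0 <= a); case: ifPn; rewrite ?eqxx //= -?ltNge => b_sign _.
  by rewrite mul1r ltW.
by rewrite mulN1r oppr_le0.
Qed.

Section SignLoss.
Variables (R : realFieldType) (d k : nat) (e1 e2 : 'I_d -> R).

Lemma psi_sign_ge0 : 0 <= psi_sign e1 e2 k.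
Proof.
rewrite /psi_sign; case: ifP => // _.
by apply: (big_ind (fun y => 0 <= y)) => // a b a0 b0; rewrite le_max a0.
Qed.

Lemma norm_le_psi_sign j : j \notin TopFeatures e1 k -> `|e2 j| <= psi_sign e1 e2 k.
Proof.
move=> jT; have kd : (k < d)%N.
  rewrite ltnNge; apply: contra jT => dk.
  by rewrite inE (leq_trans (rank_le _ j) dk).
by rewrite /psi_sign kd (bigD1 j) //= le_max lexx.
Qed.

Lemma sgn_mulr_le_psi_sign i : (k <= d)%N ->
  ~~ ((i \in TopFeatures e2 k) && (sgn (e1 i) == sgn (e2 i))) ->
  sgn (e1 i) * e2 i <= psi_sign e1 e2 k.
Proof.
move=> kd; rewrite negb_and => /orP[iT2 | neq_sgn]; last first.
  exact: le_trans (sgn_mulr_le0 neq_sgn) psi_sign_ge0.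
have : (#|TopFeatures e1 k| < rank e2 i)%N.
  by move: iT2; rewrite inE card_TopFeatures // ltnNge.
case/exists_outside_norm_ge => j jT1 ij.
by rewrite (le_trans (sgn_mulr_le_norm _ _)) // (le_trans ij) // norm_le_psi_sign.
Qed.

End SignLoss.

Lemma ler_sum_setD (R : numDomainType) (I : finType) (T A : {set I}) (F : I -> R) (c : R) :
  (forall i, i \in T -> 0 <= F i) -> (forall i, i \in T :\: A -> c <= F i) ->
  c *+ #|T :\: A| <= \sum_(i in T) F i.
Proof.
move=> F_ge0 F_ge_c; rewrite (big_setID A) /= -[c *+ _]add0r -sumr_const.
apply: lerD; last exact: ler_sum.
by apply: sumr_ge0 => i /setIP[/F_ge0].
Qed.

Theorem lemma3 (R : realFieldType) (d k : nat) (hk1 : (1 <= k)%N) (hkd : (k <= d)%N)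
  (eps : R) (heps : 0 < eps) (e1 e2 : 'I_d -> R) :
  1 - SignAgree e1 e2 k <= eps^-1 * loss_sgn eps e1 e2 k.
Proof.
rewrite /SignAgree /loss_sgn; set T := TopFeatures e1 k; set A := [set i | _].
have AT : A \subset T by apply/subsetP => i; rewrite inE => /and3P[].
have hinge_ge_eps i : i \in T :\: A ->
    eps <= Num.max 0 (psi_sign e1 e2 k - sgn (e1 i) * e2 i + eps).
  rewrite in_setD => /andP[iA iT]; rewrite in_set iT /= in iA.
  by rewrite le_max lerDr subr_ge0 sgn_mulr_le_psi_sign ?orbT.
have hinge_ge0 i : i \in T ->
    0 <= Num.max 0 (psi_sign e1 e2 k - sgn (e1 i) * e2 i + eps).
  by rewrite le_max lexx.
have := ler_sum_setD hinge_ge0 hinge_ge_eps.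
rewrite cardsDS // card_TopFeatures // => sum_ge.
have k_gt0 : 0 < k%:R :> R by rewrite ltr0n.
have -> : 1 - #|A|%:R / k%:R = (k - #|A|)%:R / k%:R :> R.
  rewrite natrB ?mulrBl ?divff ?gt_eqF //.
  by rewrite -(card_TopFeatures e1 hkd) subset_leq_card.
rewrite mulrCA [_ / k%:R]mulrC ler_pM2l ?invr_gt0 //.
by rewrite ler_pdivlMl // mulr_natr.
Qed.
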